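(* Let $\Sigma$ be a non-empty finite alphabet and $L \subseteq \Sigma^*$ a commutative group language over $\Sigma$. Then for every $\Gamma \subseteq \Sigma$, the language $\pi_\Gamma(L)$ is a commutative group language over the alphabet $\Gamma$.
   Context: $L$ is commutative if for every $w \in L$, every word $u$ with $|u|_a = |w|_a$ for all letters $a$ also lies in $L$. A group language over an alphabet $\Delta$ is a language recognized by a permutation automaton over $\Delta$, i.e. a complete deterministic finite automaton $(\Delta,Q,\delta,q_0,F)$ in which each letter acts as a permutation of $Q$; by convention, for $\Delta = \emptyset$ the group languages over $\Delta$ are exactly $\emptyset$ and $\{\varepsilon\}$. For $\Gamma \subseteq \Sigma$, $\pi_\Gamma : \Sigma^* \to \Gamma^*$ is the homomorphism with $\pi_\Gamma(x) = x$ for $x \in \Gamma$ and $\pi_\Gamma(x) = \varepsilon$ otherwise, applied elementwise to languages. *)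

From mathcomp Require Import all_boot.
Set Implicit Arguments. Unset Strict Implicit. Unset Printing Implicit Defensive.

Definition language (A : finType) := seq A -> Prop.

Definition commutative_lang (A : finType) (L : language A) : Prop :=
  forall w, L w -> forall u : seq A,
    (forall a : A, count_mem a u = count_mem a w) -> L u.

Definition run (A Q : Type) (d : Q -> A -> Q) (q : Q) (w : seq A) : Q :=
  foldl d q w.

(* L is a group language over A: recognized by a permutation automaton,
   i.e. a complete DFA (A, Q, d, q0, F) with finite state set Q in which every
   letter acts as a permutation (injective map on a finite set) of Q. *)
Definition group_lang (A : finType) (L : language A) : Prop :=
  exists (Q : finType) (d : Q -> A -> Q) (q0 : Q) (F : {set Q}),
    (forall a : A, injective (fun q => d q a)) /\
    (forall w : seq A, L w <-> run d q0 w \in F).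

Definition subalph (Sigma : finType) (G : {set Sigma}) : finType :=
  {x : Sigma | x \in G}.

Definition proj_word (Sigma : finType) (G : {set Sigma}) (w : seq Sigma)
  : seq (subalph G) :=
  pmap (fun x => insub x) w.

Definition proj_lang (Sigma : finType) (G : {set Sigma}) (L : language Sigma)
  : language (subalph G) :=
  fun v => exists w, L w /\ proj_word G w = v.
Arguments proj_lang {Sigma} G L _.
Arguments proj_word {Sigma} G w.

From mathcomp Require Import all_boot.

Set Implicit Arguments. Unset Strict Implicit. Unset Printing Implicit Defensive.

(* Since L is
   commutative, every word w of L can be reordered into its G-letters
   followed by its other letters; hence a word v over G lies in pi_G(L)
   exactly when v, followed by SOME word u over the letters outside G,
   lies in L (lemma [proj_lang_extP]).  This characterization gives both
   halves of the theorem: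
   - pi_G(L) is commutative, since permuting v keeps v ++ u in L;
   - pi_G(L) is recognized by the restriction of d to G, with final states
     those from which F is reachable by letters outside G; reachability is
     decidable through the transitive closure [connect] of a one-step
     relation (lemma [connect_runP]), and restricting a permutation
     automaton to fewer letters keeps it a permutation automaton. *)

Lemma commutative_perm (A : finType) (L : language A) (w u : seq A) :
  commutative_lang L -> L w -> perm_eq w u -> L u.
Proof. by move=> Lcomm Lw /permP wu; apply: (Lcomm w Lw) => a; rewrite wu. Qed.

Lemma count_mem_perm (A : eqType) (s t : seq A) :
  (forall a, count_mem a s = count_mem a t) -> perm_eq s t.
Proof. by move=> st; apply/allP => a _; rewrite /= st. Qed.

Lemma run_cat (A Q : Type) (d : Q -> A -> Q) (q : Q) (s t : seq A) :
  run d q (s ++ t) = run d (run d q s) t.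
Proof. exact: foldl_cat. Qed.

Lemma run_map (A B Q : Type) (f : A -> B) (d : Q -> B -> Q) (q : Q)
  (v : seq A) : run (fun q a => d q (f a)) q v = run d q (map f v).
Proof. by elim: v q => //= a v IH q; rewrite /run /= -!/(run _ _ _) IH. Qed.

Section Reachability.
Variables (A Q : finType) (d : Q -> A -> Q) (P : pred A).

Definition step_in : rel Q := fun q p => [exists a, P a && (d q a == p)].

Lemma connect_runP (q p : Q) :
  reflect (exists2 u, all P u & run d q u = p) (connect step_in q p).
Proof.
apply: (iffP (@connectP _ step_in q p)) => [[ps qps ->] | [u Pu <-]].
  elim: ps q qps => [|r ps IH] q /=; first by exists [::].
  case/andP=> /existsP[a /andP[Pa /eqP <-]] /IH[u Pu run_u].
  by exists (a :: u); rewrite /= ?Pa.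
elim: u q Pu => [|a u IH] q /=; first by exists [::].
case/andP=> Pa /(IH (d q a))[ps qps run_u]; exists (d q a :: ps) => //=.
by rewrite qps andbT; apply/existsP; exists a; rewrite Pa eqxx.
Qed.

End Reachability.

Section Projection.
Variables (Sigma : finType) (G : {set Sigma}).

Definition outside : pred Sigma := fun x => x \notin G.

Lemma proj_word_cat (s t : seq Sigma) :
  proj_word G (s ++ t) = proj_word G s ++ proj_word G t.
Proof. exact: pmap_cat. Qed.

Lemma proj_word_val (v : seq (subalph G)) : proj_word G (map val v) = v.
Proof. exact/map_pK/valK. Qed.

Lemma proj_word_outside (u : seq Sigma) : all outside u -> proj_word G u = [::].
Proof.
by elim: u => //= x u IH /andP[xG /IH]; rewrite /proj_word /= insubN.
Qed.

Lemma val_proj_word (w : seq Sigma) :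
  map val (proj_word G w) = filter (mem G) w.
Proof.
by rewrite (pmap_filter (@insubK _ _ _)); apply: eq_filter => x; rewrite isSome_insub.
Qed.

Lemma perm_proj_split (w : seq Sigma) :
  perm_eq w (map val (proj_word G w) ++ filter outside w).
Proof. by rewrite val_proj_word perm_sym perm_filterC. Qed.

Lemma proj_lang_extP (L : language Sigma) (v : seq (subalph G)) :
  commutative_lang L ->
  proj_lang G L v <-> exists2 u, all outside u & L (map val v ++ u).
Proof.
move=> Lcomm; split=> [[w [Lw <-]] | [u out_u Lvu]].
  exists (filter outside w); first exact: filter_all.
  exact: commutative_perm Lcomm Lw (perm_proj_split w).
exists (map val v ++ u); split=> //.
by rewrite proj_word_cat proj_word_val proj_word_outside ?cats0.
Qed.

Lemma proj_commutative (L : language Sigma) :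
  commutative_lang L -> commutative_lang (proj_lang G L).
Proof.
move=> Lcomm v /(proj_lang_extP _ Lcomm)[u out_u Lvu] v' v'v.
apply/(proj_lang_extP _ Lcomm); exists u => //.
apply: commutative_perm Lcomm Lvu _.
by rewrite perm_cat2r; apply/perm_map/count_mem_perm => a; rewrite v'v.
Qed.

Section Automaton.
Variables (Q : finType) (d : Q -> Sigma -> Q) (q0 : Q) (F : {set Q}).

Definition proj_delta (q : Q) (a : subalph G) : Q := d q (val a).

Definition proj_final : {set Q} :=
  [set q | [exists p in F, connect (step_in d outside) q p]].

Lemma proj_final_runP (q : Q) :
  reflect (exists2 u, all outside u & run d q u \in F) (q \in proj_final).
Proof.
rewrite inE; apply: (iffP exists_inP) => [[p pF /connect_runP[u out_u run_u]] |
                                         [u out_u run_uF]].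
  by exists u; rewrite ?run_u.
by exists (run d q u) => //; apply/connect_runP; exists u.
Qed.

Lemma proj_automaton_correct (L : language Sigma) :
  commutative_lang L -> (forall w, L w <-> run d q0 w \in F) ->
  forall v, proj_lang G L v <-> run proj_delta q0 v \in proj_final.
Proof.
move=> Lcomm L_run v; apply: iff_trans (proj_lang_extP _ Lcomm) _; rewrite run_map.
split=> [[u out_u /L_run] | /proj_final_runP[u out_u run_uF]].
  by rewrite run_cat => run_uF; apply/proj_final_runP; exists u.
by exists u => //; apply/L_run; rewrite run_cat.
Qed.

End Automaton.

End Projection.

Arguments proj_delta {Sigma} G {Q} d q a.
Arguments proj_final {Sigma} G {Q} d F.

Theorem mainTheorem6 (Sigma : finType) (hS : 0 < #|Sigma|)
  (L : language Sigma) :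
  commutative_lang L -> group_lang L ->
  forall G : {set Sigma},
    commutative_lang (proj_lang G L) /\ group_lang (proj_lang G L).
Proof.
move=> Lcomm [Q [d [q0 [F [d_inj L_run]]]]] G.
split; first exact: proj_commutative.
exists Q, (proj_delta G d), q0, (proj_final G d F); split.
  by move=> a p q /d_inj.
exact: proj_automaton_correct.
Qed.
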